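(* In the two-period, two-sequence crossover design ($T=2$, $\mathcal{S}^{\mathrm{obs}}=\{AB,BA\}$, $N_{AB},N_{BA}\ge1$) under complete randomization, suppose Assumption 1 holds. Then the only unbiased linear estimator of $\tau_1$ is $\widehat Y_1(AB)-\widehat Y_1(BA)$, and for each $z\in\{A,B\}$ there is no unbiased linear estimator of $\tau_2(z)$ nor of $\tau_2^1(z)$.
   Context: Setup: $N$ units, treatments $A,B$, $T$ periods; sequences $\vec z\in\{A,B\}^T$, $\vec z_{[t_1,t_2]}=z_{t_1}\cdots z_{t_2}$. Complete randomization: fixed positive group sizes $N_{\vec z}$ for $\vec z\in\mathcal{S}^{\mathrm{obs}}$ summing to $N$, assignment uniform over assignments with these group sizes. Fixed potential outcomes $Y_{it}(\vec z)$ for all $\vec z\in\{A,B\}^T$ (including unimplemented sequences); observed $Y_{it}=Y_{it}(\vec Z_i)$; randomness only from assignment. $\bar Y_t(\vec z)=N^{-1}\sum_iY_{it}(\vec z)$, $\widehat Y_t(\vec z)=N_{\vec z}^{-1}\sum_iY_{it}\mathbf1(\vec Z_i=\vec z)$. Assumption 1 (no anticipation): $Y_{it}(\vec z)=Y_{it}(\vec z')$ whenever $\vec z_{[1,t]}=\vec z'_{[1,t]}$. Estimands: $\tau_1=\bar Y_1(A)-\bar Y_1(B)$, $\tau_2(z_1)=\bar Y_2(z_1A)-\bar Y_2(z_1B)$, $\tau_2^1(z_2)=\bar Y_2(Az_2)-\bar Y_2(Bz_2)$. A linear estimator is $\sum_{t=1}^2\sum_{\vec z\in\mathcal{S}^{\mathrm{obs}}}\tilde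 w_t(\vec z)\widehat Y_t(\vec z)$ with non-random real weights; it is unbiased for an estimand if its expectation equals the estimand for every finite population of potential outcomes satisfying the stated assumptions. *)

From HB Require Import structures.
From mathcomp Require Import all_boot all_order all_algebra.
Set Implicit Arguments. Unset Strict Implicit. Unset Printing Implicit Defensive.
Import Order.TTheory GRing.Theory Num.Theory.
Local Open Scope ring_scope.

Inductive trt := A | B.

Definition trt2bool (x : trt) : bool := if x is A then true else false.
Definition bool2trt (b : bool) : trt := if b then A else B.
Lemma trt2boolK : cancel trt2bool bool2trt. Proof. by case. Qed.
HB.instance Definition _ := Finite.copy trt (can_type trt2boolK).

Definition tseq := (trt * trt)%type.
Definition AB : tseq := (A, B).
Definition BA : tseq := (B, A).

Definition Sobs : seq tseq := [:: AB; BA].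

Notation Nunits nAB nBA := (nAB + nBA)%N.

(* Potential outcomes Y_{it}(z), periods t = 1, 2 (as nat), all z in {A,B}^2. *)
Definition pot_out (R : Type) (N : nat) := 'I_N -> nat -> tseq -> R.

(* Assumption 1 (no anticipation) for T = 2: for t = 1 the potential outcome
   depends only on z_1; for t = 2 the condition z_[1,2] = z'_[1,2] is z = z'
   and hence vacuous. *)
Definition no_anticipation (R : Type) (N : nat) (Y : pot_out R N) : Prop :=
  forall (i : 'I_N) (z z' : tseq), z.1 = z'.1 -> Y i 1%N z = Y i 1%N z'.

Definition Nz (nAB nBA : nat) (z : tseq) : nat :=
  if z == AB then nAB else if z == BA then nBA else 0%N.

Definition admissible (nAB nBA : nat) (Z : {ffun 'I_(Nunits nAB nBA) -> tseq}) : bool :=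
  [forall i, Z i \in Sobs] &&
  (#|[set i | Z i == AB]| == nAB) && (#|[set i | Z i == BA]| == nBA).

Definition Expect (R : fieldType) (nAB nBA : nat)
    (f : {ffun 'I_(Nunits nAB nBA) -> tseq} -> R) : R :=
  (#|[pred Z | @admissible nAB nBA Z]|%:R)^-1 *
  \sum_(Z | @admissible nAB nBA Z) f Z.

Definition Ybar (R : fieldType) (N : nat) (Y : pot_out R N) (t : nat) (z : tseq) : R :=
  (N%:R)^-1 * \sum_(i < N) Y i t z.

Definition Yhat (R : fieldType) (nAB nBA : nat) (Y : pot_out R (Nunits nAB nBA))
    (Z : {ffun 'I_(Nunits nAB nBA) -> tseq}) (t : nat) (z : tseq) : R :=
  ((Nz nAB nBA z)%:R)^-1 *
  \sum_(i < Nunits nAB nBA) (Y i t (Z i) * (Z i == z)%:R).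

Definition lin_est (R : fieldType) (nAB nBA : nat) (w : nat -> tseq -> R)
    (Y : pot_out R (Nunits nAB nBA)) (Z : {ffun 'I_(Nunits nAB nBA) -> tseq}) : R :=
  \sum_(t <- [:: 1%N; 2%N]) \sum_(z <- Sobs) w t z * Yhat Y Z t z.

Definition unbiased (R : fieldType) (nAB nBA : nat) (w : nat -> tseq -> R)
    (tau : pot_out R (Nunits nAB nBA) -> R) : Prop :=
  forall Y : pot_out R (Nunits nAB nBA), no_anticipation Y ->
    Expect (fun Z => lin_est w Y Z) = tau Y.

Definition tau1 (R : fieldType) (N : nat) (Y : pot_out R N) : R :=
  Ybar Y 1%N (A, A) - Ybar Y 1%N (B, B).
Definition tau2 (R : fieldType) (N : nat) (z1 : trt) (Y : pot_out R N) : R :=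
  Ybar Y 2%N (z1, A) - Ybar Y 2%N (z1, B).
Definition tau21 (R : fieldType) (N : nat) (z2 : trt) (Y : pot_out R N) : R :=
  Ybar Y 2%N (A, z2) - Ybar Y 2%N (B, z2).

(* Relabelling units by a permutation preserves complete randomization, so every
   unit receives sequence z in the same number of admissible assignments, namely a
   fraction N_z / N of them; hence each \hat Y_t(z) with z observed is unbiased for
   \bar Y_t(z) and a linear estimator has mean \sum_{t,z} w_t(z) \bar Y_t(z).
   Populations whose outcomes do not depend on the unit and whose period-1 outcome
   only depends on z_1 satisfy Assumption 1 and make this mean an arbitrary linear
   form in the values g(z_1) at t = 1 and h(z) at t = 2, with h(AA), h(BB) never
   observed. Matching it with tau_1 forces the weights, whereas tau_2(z) and
   tau_2^1(z) are nonzero on the population whose only nonzero outcome is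
   h(zz) = 1, on which every linear estimator has mean 0. *)

From HB Require Import structures.
From mathcomp Require Import all_boot all_order all_algebra fingroup perm.
From mathcomp Require Import ring.
Set Implicit Arguments. Unset Strict Implicit.
Import Order.TTheory GRing.Theory Num.Theory.
Local Open Scope ring_scope.

Section CompleteRandomization.
Variables nAB nBA : nat.
Local Notation N := (Nunits nAB nBA).
Local Notation assignment := {ffun 'I_N -> tseq}.
Local Notation adm := (@admissible nAB nBA).

Definition relabel_units (s : {perm 'I_N}) (Z : assignment) : assignment :=
  [ffun k => Z (s k)].

Lemma admissible_relabel s Z : adm (relabel_units s Z) = adm Z.
Proof.
have card_relabel z : #|[set i | relabel_units s Z i == z]| = #|[set i | Z i == z]|.
  have -> : [set i | relabel_units s Z i == z] = s @^-1: [set i | Z i == z].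
    by apply/setP=> k; rewrite !inE ffunE.
  exact/card_preimset/perm_inj.
rewrite /admissible !card_relabel; congr (_ && _ && _).
apply/forallP/forallP=> Zobs k; last by rewrite ffunE.
by have := Zobs (s^-1 k)%g; rewrite ffunE permKV.
Qed.

Lemma count_assigned_unit_invariant i j z :
  (\sum_(Z | adm Z) (Z i == z) = \sum_(Z | adm Z) (Z j == z))%N.
Proof.
have swapK : involutive (relabel_units (tperm i j)).
  by move=> Z; apply/ffunP=> k; rewrite !ffunE tpermK.
rewrite (reindex_inj (inv_inj swapK)) /=.
by apply: eq_big => Z; rewrite ?admissible_relabel // ffunE tpermL.
Qed.

Lemma count_assigned i z : z \in Sobs ->
  (N * \sum_(Z | adm Z) (Z i == z) = Nz nAB nBA z * #|[pred Z | adm Z]|)%N.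
Proof.
move=> zobs.
have -> : (N * \sum_(Z | adm Z) (Z i == z) = \sum_(k < N) \sum_(Z | adm Z) (Z k == z))%N.
  rewrite -[X in (X * _)%N]card_ord -sum_nat_const.
  by apply: eq_bigr => k _; apply: count_assigned_unit_invariant.
rewrite exchange_big mulnC -sum_nat_const.
apply: eq_big => [Z | Z /andP[/andP[_ /eqP nAB_Z] /eqP nBA_Z]]; first by rewrite inE.
rewrite -(big_mkcond (fun k => Z k == z) (fun _ => 1%N)) /= sum1dep_card.
by move: zobs; rewrite !inE => /orP[] /eqP->; rewrite /Nz /= ?nAB_Z ?nBA_Z.
Qed.

Lemma admissible_exists : (0 < #|[pred Z | adm Z]|)%N.
Proof.
set Z0 := [ffun k : 'I_N => if (k < nAB)%N then AB else BA].
apply/card_gt0P; exists Z0; rewrite inE /admissible.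
set first_units := [set i : 'I_N | (i < nAB)%N].
have card_first : #|first_units| = nAB.
  rewrite -sum1dep_card -(big_ord_widen _ (fun _ => 1%N) (leq_addr nBA nAB)).
  by rewrite sum_nat_const card_ord muln1.
have card_last : #|~: first_units| = nBA.
  by apply/eqP; rewrite -(eqn_add2l nAB) -{1}card_first cardsC card_ord.
have -> : [set i | Z0 i == AB] = first_units.
  by apply/setP=> i; rewrite !inE ffunE; case: (i < nAB)%N.
have -> : [set i | Z0 i == BA] = ~: first_units.
  by apply/setP=> i; rewrite !inE ffunE; case: (i < nAB)%N.
rewrite card_first card_last !eqxx !andbT.
by apply/forallP=> k; rewrite ffunE; case: (k < nAB)%N.
Qed.

Lemma eq_Expect (R : fieldType) (f g : assignment -> R) : f =1 g -> Expect f = Expect g.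
Proof. by move=> fg; rewrite /Expect; congr (_ * _); apply: eq_bigr. Qed.

Lemma ExpectD (R : fieldType) (f g : assignment -> R) :
  Expect (fun Z => f Z + g Z) = Expect f + Expect g.
Proof. by rewrite /Expect big_split mulrDr. Qed.

Lemma ExpectZ (R : fieldType) (c : R) (f : assignment -> R) : Expect (fun Z => c * f Z) = c * Expect f.
Proof. by rewrite /Expect -mulr_sumr mulrCA. Qed.

Variable R : numFieldType.
Hypotheses (nAB_gt0 : (0 < nAB)%N) (nBA_gt0 : (0 < nBA)%N).

Lemma Expect_Yhat (Y : pot_out R N) t z : z \in Sobs ->
  Expect (fun Z => Yhat Y Z t z) = Ybar Y t z.
Proof.
move=> zobs; set M := #|[pred Z | adm Z]|.
have Nz_neq0 : (Nz nAB nBA z)%:R != 0 :> R.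
  by rewrite pnatr_eq0 -lt0n; move: zobs; rewrite !inE => /orP[] /eqP->.
have N_neq0 : N%:R != 0 :> R by rewrite pnatr_eq0 -lt0n addn_gt0 nAB_gt0.
have M_neq0 : M%:R != 0 :> R by rewrite pnatr_eq0 -lt0n admissible_exists.
have count i : \sum_(Z | adm Z) ((Z i == z)%:R : R) = (Nz nAB nBA z * M)%:R / N%:R.
  by rewrite -natr_sum -(count_assigned i) // natrM mulrAC mulfV // mul1r.
have observed_term i (Z : assignment) :
    Y i t (Z i) * (Z i == z)%:R = Y i t z * (Z i == z)%:R.
  by case: eqP => [->|]; rewrite ?mulr0.
rewrite /Expect /Yhat /Ybar -/M.
under eq_bigr do under eq_bigr do rewrite observed_term.
rewrite -mulr_sumr exchange_big /=.
under eq_bigr => i _ do rewrite -mulr_sumr count.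
by rewrite -mulr_suml; field; rewrite -natrD N_neq0 Nz_neq0 M_neq0.
Qed.

Lemma Expect_lin_est (w : nat -> tseq -> R) (Y : pot_out R N) :
  Expect (fun Z => lin_est w Y Z) =
  w 1%N AB * Ybar Y 1 AB + w 1%N BA * Ybar Y 1 BA +
  (w 2%N AB * Ybar Y 2 AB + w 2%N BA * Ybar Y 2 BA).
Proof.
have Expect_term c t z : z \in Sobs ->
    Expect (fun Z => c * Yhat Y Z t z) = c * Ybar Y t z.
  by move=> zobs; rewrite ExpectZ Expect_Yhat.
rewrite (eq_Expect (g := fun Z => w 1%N AB * Yhat Y Z 1 AB + w 1%N BA * Yhat Y Z 1 BA
  + (w 2%N AB * Yhat Y Z 2 AB + w 2%N BA * Yhat Y Z 2 BA))); last first.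
  by move=> Z; rewrite /lin_est !big_cons !big_nil !addr0.
by rewrite !ExpectD !Expect_term // !inE eqxx ?orbT.
Qed.

End CompleteRandomization.

Lemma tau1_no_anticipation (R : fieldType) (N : nat) (Y : pot_out R N) :
  no_anticipation Y -> tau1 Y = Ybar Y 1 AB - Ybar Y 1 BA.
Proof.
move=> noant; rewrite /tau1 /Ybar.
by congr (_ * _ - _ * _); apply: eq_bigr => i _; apply: noant.
Qed.

Section UnitFreePopulations.
Variables (R : numFieldType) (nAB nBA : nat).
Hypotheses (nAB_gt0 : (0 < nAB)%N) (nBA_gt0 : (0 < nBA)%N).
Local Notation N := (Nunits nAB nBA).

Definition unit_free_pop (g : trt -> R) (h : tseq -> R) : pot_out R N :=
  fun _ t z => if t == 1%N then g z.1 else h z.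

Lemma unit_free_pop_no_anticipation g h : no_anticipation (unit_free_pop g h).
Proof. by move=> i z z' z1E; rewrite /unit_free_pop /= z1E. Qed.

Lemma Ybar_unit_free_pop g h t z :
  Ybar (unit_free_pop g h) t z = if t == 1%N then g z.1 else h z.
Proof.
rewrite /Ybar sumr_const card_ord -[X in _ * X]mulr_natl mulKf //.
by rewrite pnatr_eq0 -lt0n addn_gt0 nAB_gt0.
Qed.

Lemma unbiased_unit_free_pop w tau : unbiased w tau -> forall g h,
  w 1%N AB * g A + w 1%N BA * g B + (w 2%N AB * h AB + w 2%N BA * h BA)
  = tau (unit_free_pop g h).
Proof.
move=> unb g h; rewrite -unb; last exact: unit_free_pop_no_anticipation.
by rewrite Expect_lin_est // !Ybar_unit_free_pop.
Qed.

Lemma unbiased_tau1 w : unbiased w (@tau1 R N) <->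
  [/\ w 1%N AB = 1, w 1%N BA = -1, w 2%N AB = 0 & w 2%N BA = 0].
Proof.
split=> [unb | [w1AB w1BA w2AB w2BA] Y noant].
  have tau1E g h : tau1 (unit_free_pop g h) = g A - g B.
    by rewrite /tau1 !Ybar_unit_free_pop.
  have := unbiased_unit_free_pop unb (fun x => if x is A then 1 else 0) (fun _ => 0).
  have := unbiased_unit_free_pop unb (fun x => if x is A then 0 else 1) (fun _ => 0).
  have := unbiased_unit_free_pop unb (fun _ => 0) (fun s => if s is (A, B) then 1 else 0).
  have := unbiased_unit_free_pop unb (fun _ => 0) (fun s => if s is (B, A) then 1 else 0).
  rewrite !tau1E /= !mulr1 !mulr0 !addr0 ?add0r ?subr0 ?sub0r ?oppr0.
  by move=> -> -> -> ->.
rewrite Expect_lin_est // tau1_no_anticipation // w1AB w1BA w2AB w2BA.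
by rewrite !mul0r !addr0 mul1r mulN1r.
Qed.

Lemma unbiased_unobserved_outcome w tau z : unbiased w tau ->
  tau (unit_free_pop (fun _ => 0) (fun s => (s == (z, z))%:R)) = 0.
Proof.
move=> unb; rewrite -(unbiased_unit_free_pop unb).
by case: z; rewrite /= !mulr0 !addr0.
Qed.

Lemma not_unbiased_tau2 z w : ~ unbiased w (@tau2 R N z).
Proof.
move=> /(unbiased_unobserved_outcome z) /eqP.
by rewrite /tau2 !Ybar_unit_free_pop; case: z; rewrite /= ?subr0 ?sub0r ?oppr_eq0 oner_eq0.
Qed.

Lemma not_unbiased_tau21 z w : ~ unbiased w (@tau21 R N z).
Proof.
move=> /(unbiased_unobserved_outcome z) /eqP.
by rewrite /tau21 !Ybar_unit_free_pop; case: z; rewrite /= ?subr0 ?sub0r ?oppr_eq0 oner_eq0.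
Qed.

End UnitFreePopulations.

Theorem proposition4 (R : realFieldType) (nAB nBA : nat) :
  (0 < nAB)%N -> (0 < nBA)%N ->
  (forall w : nat -> tseq -> R,
     unbiased w (@tau1 R (Nunits nAB nBA)) <->
     [/\ w 1%N AB = 1, w 1%N BA = -1, w 2%N AB = 0 & w 2%N BA = 0]) /\
  (forall (z : trt) (w : nat -> tseq -> R),
     ~ unbiased w (@tau2 R (Nunits nAB nBA) z)) /\
  (forall (z : trt) (w : nat -> tseq -> R),
     ~ unbiased w (@tau21 R (Nunits nAB nBA) z)).
Proof.
move=> nAB_gt0 nBA_gt0; split; first exact: unbiased_tau1.
by split=> z w; [apply: not_unbiased_tau2 | apply: not_unbiased_tau21].
Qed.
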